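(* In the binary setting, for any prior $\pi\in(0,1)$ and qualities $\tfrac12\le q_2<q_1\le1$, $$U_\pi(q_1)-U_\pi(q_2)\le\bar f(v_H-v_L)^2\Big[\tfrac23(q_1^3-q_2^3)-\tfrac12(q_1^2-q_2^2)\Big],\qquad \bar f=\sup_{p\in[v_L,v_H]}f(p).$$ Consequently, if a signal of quality $q_1$ costs more than this amount above the cost of a signal of quality $q_2$, the advertiser prefers (buying only) the signal of quality $q_2$ regardless of her prior.
   Context: Binary setting: a single advertiser bids in a second-price auction; the user is of type $H$ with prior $\pi$ and $L$ otherwise, values $v_H>v_L\ge0$; the highest competing bid is independent of type with density $f$ and cdf $F$. $U_\pi(q)$ denotes the advertiser's value (expected utility with the signal minus without) for a signal $s\in\{h,\ell\}$ of quality $q$, i.e. $\Pr[s=h\mid H]=\Pr[s=\ell\mid L]=q$; without data she bids $\pi v_H+(1-\pi)v_L$ and with the signal she bids her posterior expected value. *)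

From Stdlib Require Import Reals Lra.
Open Scope R_scope.

(* Integrability hypothesis on the density f of the highest competing bid:
   for every value v and bid b, p |-> (v - p) f(p) is Riemann integrable on [0,b]. *)
Definition integrable_payoffs (f : R -> R) : Type :=
  forall v b : R, Riemann_integrable (fun p => (v - p) * f p) 0 b.

(* Expected utility in a second-price auction of an advertiser with value v
   bidding b: she wins iff the competing bid p < b and pays p.
   W v b = int_0^b (v - p) f(p) dp. *)
Definition W (f : R -> R) (pr : integrable_payoffs f) (v b : R) : R :=
  RiemannInt (pr v b).

Definition bid0 (vH vL pi : R) : R := pi * vH + (1 - pi) * vL.

(* Signal s in {h, l} of quality q: Pr[h|H] = Pr[l|L] = q. *)
Definition prob_h (pi q : R) : R := pi * q + (1 - pi) * (1 - q).
Definition prob_l (pi q : R) : R := pi * (1 - q) + (1 - pi) * q.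
Definition post_h (pi q : R) : R := pi * q / prob_h pi q.
Definition post_l (pi q : R) : R := pi * (1 - q) / prob_l pi q.
Definition bid_h (vH vL pi q : R) : R := post_h pi q * vH + (1 - post_h pi q) * vL.
Definition bid_l (vH vL pi q : R) : R := post_l pi q * vH + (1 - post_l pi q) * vL.

Definition EU0 f pr (vH vL pi : R) : R :=
  pi * W f pr vH (bid0 vH vL pi) + (1 - pi) * W f pr vL (bid0 vH vL pi).

(* Expected utility with the signal of quality q (joint law of type and signal). *)
Definition EUsig f pr (vH vL pi q : R) : R :=
  pi * q * W f pr vH (bid_h vH vL pi q)
  + (1 - pi) * (1 - q) * W f pr vL (bid_h vH vL pi q)
  + pi * (1 - q) * W f pr vH (bid_l vH vL pi q)
  + (1 - pi) * q * W f pr vL (bid_l vH vL pi q).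

Definition U f pr (vH vL pi q : R) : R := EUsig f pr vH vL pi q - EU0 f pr vH vL pi.

Definition Ubound (fbar vH vL q1 q2 : R) : R :=
  fbar * (vH - vL) ^ 2 *
  (2 / 3 * (q1 ^ 3 - q2 ^ 3) - 1 / 2 * (q1 ^ 2 - q2 ^ 2)).

(* Let F be the law of the competing bid. After signal s the advertiser's
   posterior value equals her bid b_s, so U_pi(q) is the sum over s of
   Pr[s] int_{bid0}^{b_s} (b_s - p) dF(p). From q2 to q1 the high bid rises and
   the low bid falls, and the increment of U splits into integrals of nonnegative
   affine weights against f over the four segments cut out of [vL, vH] by
   b_l(q1) <= b_l(q2) <= bid0 <= b_h(q2) <= b_h(q1). Replacing f by fbar there
   leaves the uniform case, where the value is explicit,
   (vH - vL)^2 pi^2 (1 - pi)^2 (2q - 1)^2 / (2 Pr[h] Pr[l]), and its increment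
   is at most (vH - vL)^2 ((2q1 - 1)^2 - (2q2 - 1)^2) / 8 since
   Pr[h] Pr[l] >= pi (1 - pi). *)

From Stdlib Require Import Reals Lra.
From Coquelicot Require Import Coquelicot.
Open Scope R_scope.

Lemma RInt_lincomb (g1 g2 : R -> R) (c1 c2 a b : R) :
  ex_RInt g1 a b -> ex_RInt g2 a b ->
  RInt (fun p => c1 * g1 p + c2 * g2 p) a b = c1 * RInt g1 a b + c2 * RInt g2 a b.
Proof.
  intros H1 H2.
  assert (S1 : RInt (fun p => c1 * g1 p) a b = c1 * RInt g1 a b) by exact (RInt_scal g1 a b c1 H1).
  assert (S2 : RInt (fun p => c2 * g2 p) a b = c2 * RInt g2 a b) by exact (RInt_scal g2 a b c2 H2).
  rewrite <- S1, <- S2.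
  exact (RInt_plus (fun p => scal c1 (g1 p)) (fun p => scal c2 (g2 p)) a b
           (ex_RInt_scal _ _ _ c1 H1) (ex_RInt_scal _ _ _ c2 H2)).
Qed.

Definition affine_increment (G H : R -> R) (a c x y : R) : R :=
  a * (G y - G x) + c * (H y - H x).

Lemma affine_nonneg_between a c x y p :
  0 <= a + c * x -> 0 <= a + c * y -> x <= p <= y -> 0 <= a + c * p.
Proof.
  intros Hx Hy Hp.
  destruct (Req_dec x y) as [<-|Hxy]; [replace p with x by lra; exact Hx|].
  assert (Hmix : (y - x) * (a + c * p) = (y - p) * (a + c * x) + (p - x) * (a + c * y)) by ring.
  apply Rmult_le_reg_l with (y - x); [lra|].
  rewrite Rmult_0_r, Hmix.
  apply Rplus_le_le_0_compat; apply Rmult_le_pos; lra.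
Qed.

Lemma continuous_affine a c p : continuous (fun p => a + c * p) p.
Proof.
  apply (ex_derive_continuous (V := R_CompleteNormedModule) (fun p => a + c * p)).
  auto_derive; exact I.
Qed.

Lemma ex_RInt_affine a c x y : ex_RInt (fun p => a + c * p) x y.
Proof. apply (ex_RInt_continuous (V := R_CompleteNormedModule)); intros p _; apply continuous_affine. Qed.

Lemma RInt_affine a c x y :
  RInt (fun p => a + c * p) x y = affine_increment (fun p => p) (fun p => p ^ 2 / 2) a c x y.
Proof.
  apply is_RInt_unique.
  replace (affine_increment (fun p => p) (fun p => p ^ 2 / 2) a c x y)
    with (minus ((fun p => a * p + c * (p ^ 2 / 2)) y) ((fun p => a * p + c * (p ^ 2 / 2)) x))
    by (unfold affine_increment, minus, plus, opp; simpl; ring).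
  apply (is_RInt_derive (V := R_CompleteNormedModule) (fun p => a * p + c * (p ^ 2 / 2))).
  - intros p _; auto_derive; [exact I | field].
  - intros p _; apply continuous_affine.
Qed.

Section Moments.

Variables (f : R -> R) (pr : integrable_payoffs f).

Lemma ex_RInt_payoff v x y : ex_RInt (fun p => (v - p) * f p) x y.
Proof.
  apply ex_RInt_Chasles with 0.
  - apply ex_RInt_swap, ex_RInt_Reals_1, pr.
  - apply ex_RInt_Reals_1, pr.
Qed.

Lemma RInt_payoff v x y :
  RInt (fun p => (v - p) * f p) x y = W f pr v y - W f pr v x.
Proof.
  unfold W; rewrite <- !RInt_Reals.
  rewrite <- (RInt_Chasles _ x 0 y) by apply ex_RInt_payoff.
  rewrite <- (opp_RInt_swap _ 0 x) by apply ex_RInt_payoff.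
  unfold plus, opp; simpl; ring.
Qed.

(* [mass b = int_0^b f] and [moment b = int_0^b p f(p) dp], read off [W] so
   that the integrability hypothesis on the payoffs suffices. *)
Definition mass b := W f pr 1 b - W f pr 0 b.
Definition moment b := - W f pr 0 b.

Lemma RInt_affine_density a c x y :
  RInt (fun p => (a + c * p) * f p) x y = affine_increment mass moment a c x y.
Proof.
  unfold affine_increment, mass, moment.
  replace (a * (W f pr 1 y - W f pr 0 y - (W f pr 1 x - W f pr 0 x))
           + c * (- W f pr 0 y - - W f pr 0 x))
    with (a * (W f pr 1 y - W f pr 1 x) + (- (a + c)) * (W f pr 0 y - W f pr 0 x)) by ring.
  rewrite <- !RInt_payoff, <- RInt_lincomb by apply ex_RInt_payoff.
  apply RInt_ext; intros p _; simpl; ring.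
Qed.

Lemma W_affine v b : W f pr v b = v * mass b - moment b.
Proof.
  assert (W0 : forall u, W f pr u 0 = 0)
    by (intro u; unfold W; rewrite <- RInt_Reals; exact (RInt_point 0 _)).
  pose proof (RInt_affine_density v (-1) 0 b) as E.
  rewrite (RInt_ext _ (fun p => (v - p) * f p)), RInt_payoff in E
    by (intros p _; simpl; ring).
  unfold affine_increment, mass, moment in *; rewrite !W0 in *; lra.
Qed.

Lemma ex_RInt_affine_density a c x y : ex_RInt (fun p => (a + c * p) * f p) x y.
Proof.
  apply (ex_RInt_ext (V := R_NormedModule)
           (fun p => a * ((1 - p) * f p) + (- (a + c)) * ((0 - p) * f p))).
  - intros p _; simpl; ring.
  - exact (ex_RInt_plus (V := R_NormedModule)
             (fun p => scal a ((1 - p) * f p)) (fun p => scal (- (a + c)) ((0 - p) * f p)) x y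
             (ex_RInt_scal _ _ _ _ (ex_RInt_payoff 1 x y))
             (ex_RInt_scal _ _ _ _ (ex_RInt_payoff 0 x y))).
Qed.

Lemma affine_increment_le fbar a c x y :
  x <= y -> (forall p, x <= p <= y -> f p <= fbar) ->
  0 <= a + c * x -> 0 <= a + c * y ->
  affine_increment mass moment a c x y
  <= fbar * affine_increment (fun p => p) (fun p => p ^ 2 / 2) a c x y.
Proof.
  intros Hxy Hf Hx Hy.
  rewrite <- RInt_affine_density, <- RInt_affine.
  assert (Hunif : RInt (fun p => fbar * (a + c * p)) x y = fbar * RInt (fun p => a + c * p) x y)
    by exact (RInt_scal (V := R_CompleteNormedModule) _ x y fbar (ex_RInt_affine a c x y)).
  rewrite <- Hunif.
  apply RInt_le; [exact Hxy | apply ex_RInt_affine_density | |].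
  - exact (ex_RInt_scal (V := R_NormedModule) _ x y fbar (ex_RInt_affine a c x y)).
  - intros p Hp; rewrite (Rmult_comm fbar); apply Rmult_le_compat_l.
    + apply (affine_nonneg_between a c x y); lra.
    + apply Hf; lra.
Qed.

End Moments.

Definition spread (vH vL pi : R) : R := (vH - vL) * (pi * (1 - pi)).

Section Signal.

Variables (vH vL pi : R).
Hypothesis Hpi : 0 < pi < 1.

Lemma prob_h_pos q : 0 <= q <= 1 -> 0 < prob_h pi q.
Proof. intros Hq; unfold prob_h; nra. Qed.

Lemma prob_l_pos q : 0 <= q <= 1 -> 0 < prob_l pi q.
Proof. intros Hq; unfold prob_l; nra. Qed.

Lemma prob_h_bid_h_sub_bid0 q : 0 <= q <= 1 ->
  prob_h pi q * (bid_h vH vL pi q - bid0 vH vL pi) = spread vH vL pi * (2 * q - 1).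
Proof.
  intros Hq; pose proof (prob_h_pos q Hq).
  unfold bid_h, post_h, bid0, spread in *; unfold prob_h in *; field; lra.
Qed.

Lemma prob_l_bid0_sub_bid_l q : 0 <= q <= 1 ->
  prob_l pi q * (bid0 vH vL pi - bid_l vH vL pi q) = spread vH vL pi * (2 * q - 1).
Proof.
  intros Hq; pose proof (prob_l_pos q Hq).
  unfold bid_l, post_l, bid0, spread in *; unfold prob_l in *; field; lra.
Qed.

Lemma post_h_le q2 q1 : 0 <= q2 -> q2 <= q1 -> q1 <= 1 -> post_h pi q2 <= post_h pi q1.
Proof.
  intros H2 H21 H1.
  pose proof (prob_h_pos q1 ltac:(lra)); pose proof (prob_h_pos q2 ltac:(lra)).
  assert (E : post_h pi q1 - post_h pi q2
              = pi * (1 - pi) * (q1 - q2) / (prob_h pi q1 * prob_h pi q2))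
    by (unfold post_h in *; unfold prob_h in *; field; lra).
  assert (0 <= pi * (1 - pi) * (q1 - q2) / (prob_h pi q1 * prob_h pi q2)).
  { apply Rdiv_le_0_compat; [|apply Rmult_lt_0_compat; lra].
    apply Rmult_le_pos; [|lra]; nra. }
  lra.
Qed.

Lemma post_l_le q2 q1 : 0 <= q2 -> q2 <= q1 -> q1 <= 1 -> post_l pi q1 <= post_l pi q2.
Proof.
  intros H2 H21 H1.
  pose proof (prob_l_pos q1 ltac:(lra)); pose proof (prob_l_pos q2 ltac:(lra)).
  assert (E : post_l pi q2 - post_l pi q1
              = pi * (1 - pi) * (q1 - q2) / (prob_l pi q1 * prob_l pi q2))
    by (unfold post_l in *; unfold prob_l in *; field; lra).
  assert (0 <= pi * (1 - pi) * (q1 - q2) / (prob_l pi q1 * prob_l pi q2)).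
  { apply Rdiv_le_0_compat; [|apply Rmult_lt_0_compat; lra].
    apply Rmult_le_pos; [|lra]; nra. }
  lra.
Qed.

Hypothesis HvL : vL <= vH.

Lemma spread_nonneg : 0 <= spread vH vL pi.
Proof. unfold spread; apply Rmult_le_pos; nra. Qed.

Lemma bid0_le_bid_h q : 1 / 2 <= q <= 1 -> bid0 vH vL pi <= bid_h vH vL pi q.
Proof.
  intros Hq.
  pose proof (prob_h_pos q ltac:(lra)); pose proof (prob_h_bid_h_sub_bid0 q ltac:(lra)).
  assert (0 <= spread vH vL pi * (2 * q - 1)) by (apply Rmult_le_pos; [apply spread_nonneg | lra]).
  nra.
Qed.

Lemma bid_l_le_bid0 q : 1 / 2 <= q <= 1 -> bid_l vH vL pi q <= bid0 vH vL pi.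
Proof.
  intros Hq.
  pose proof (prob_l_pos q ltac:(lra)); pose proof (prob_l_bid0_sub_bid_l q ltac:(lra)).
  assert (0 <= spread vH vL pi * (2 * q - 1)) by (apply Rmult_le_pos; [apply spread_nonneg | lra]).
  nra.
Qed.

Lemma bid_h_le q2 q1 : 0 <= q2 -> q2 <= q1 -> q1 <= 1 ->
  bid_h vH vL pi q2 <= bid_h vH vL pi q1.
Proof.
  intros H2 H21 H1; pose proof (post_h_le q2 q1 H2 H21 H1).
  unfold bid_h; nra.
Qed.

Lemma bid_l_le q2 q1 : 0 <= q2 -> q2 <= q1 -> q1 <= 1 ->
  bid_l vH vL pi q1 <= bid_l vH vL pi q2.
Proof.
  intros H2 H21 H1; pose proof (post_l_le q2 q1 H2 H21 H1).
  unfold bid_l; nra.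
Qed.

Lemma bid_h_one : bid_h vH vL pi 1 = vH.
Proof. unfold bid_h, post_h, prob_h; field; lra. Qed.

Lemma bid_l_one : bid_l vH vL pi 1 = vL.
Proof. unfold bid_l, post_l, prob_l; field; lra. Qed.

End Signal.

(* The value of the signal when the competing bid has cumulative mass [G] and
   first moment [H]: after signal [s] her posterior value equals her new bid
   [b_s], and moving the bid from [bid0] to [b_s] gains
   [int_{bid0}^{b_s} (b_s - p) dF(p)] given [s]. *)
Definition signal_value (G H : R -> R) (vH vL pi q : R) : R :=
  prob_h pi q * affine_increment G H (bid_h vH vL pi q) (-1) (bid0 vH vL pi) (bid_h vH vL pi q)
  + prob_l pi q * affine_increment G H (bid_l vH vL pi q) (-1) (bid0 vH vL pi) (bid_l vH vL pi q).

Definition uniform_value (vH vL pi q : R) : R :=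
  (spread vH vL pi * (2 * q - 1)) ^ 2 / (2 * (prob_h pi q * prob_l pi q)).

Lemma U_signal_value f (pr : integrable_payoffs f) vH vL pi q :
  0 < pi < 1 -> 0 <= q <= 1 ->
  U f pr vH vL pi q = signal_value (mass f pr) (moment f pr) vH vL pi q.
Proof.
  intros Hpi Hq.
  pose proof (prob_h_pos pi Hpi q Hq); pose proof (prob_l_pos pi Hpi q Hq).
  unfold U, EUsig, EU0, signal_value, affine_increment; rewrite !W_affine.
  unfold bid_h, bid_l, post_h, post_l, bid0 in *; unfold prob_h, prob_l in *.
  field; lra.
Qed.

Lemma signal_value_uniform vH vL pi q : 0 < pi < 1 -> 0 <= q <= 1 ->
  signal_value (fun p => p) (fun p => p ^ 2 / 2) vH vL pi q = uniform_value vH vL pi q.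
Proof.
  intros Hpi Hq.
  pose proof (prob_h_pos pi Hpi q Hq) as Ph; pose proof (prob_l_pos pi Hpi q Hq) as Pl.
  pose proof (prob_h_bid_h_sub_bid0 vH vL pi Hpi q Hq) as Eh.
  pose proof (prob_l_bid0_sub_bid_l vH vL pi Hpi q Hq) as El.
  assert (Hsum : prob_h pi q + prob_l pi q = 1) by (unfold prob_h, prob_l; ring).
  (* both conditional gains are [P (b_s - bid0)^2 / 2] *)
  transitivity ((prob_h pi q * (bid_h vH vL pi q - bid0 vH vL pi)) ^ 2 / (2 * prob_h pi q)
     + (prob_l pi q * (bid0 vH vL pi - bid_l vH vL pi q)) ^ 2 / (2 * prob_l pi q)).
  - unfold signal_value, affine_increment; field; lra.
  - rewrite Eh, El; unfold uniform_value.
    set (X := spread vH vL pi * (2 * q - 1)).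
    transitivity (X ^ 2 * (prob_h pi q + prob_l pi q) / (2 * (prob_h pi q * prob_l pi q)));
      [field; lra | rewrite Hsum; field; lra].
Qed.

Lemma prob_h_mul_prob_l_ge pi q : 0 <= q <= 1 -> pi * (1 - pi) <= prob_h pi q * prob_l pi q.
Proof.
  intros Hq.
  assert (E : prob_h pi q * prob_l pi q - pi * (1 - pi) = (1 - 2 * pi) ^ 2 * (q * (1 - q)))
    by (unfold prob_h, prob_l; ring).
  assert (0 <= (1 - 2 * pi) ^ 2 * (q * (1 - q))) by (apply Rmult_le_pos; [apply pow2_ge_0 | nra]).
  lra.
Qed.

Lemma uniform_value_increment_le vH vL pi q1 q2 :
  0 < pi < 1 -> 1 / 2 <= q2 -> q2 <= q1 -> q1 <= 1 ->
  uniform_value vH vL pi q1 - uniform_value vH vL pi q2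
  <= (vH - vL) ^ 2 * ((2 * q1 - 1) ^ 2 - (2 * q2 - 1) ^ 2) / 8.
Proof.
  intros Hpi H2 H21 H1.
  pose proof (prob_h_pos pi Hpi q1 ltac:(lra)); pose proof (prob_l_pos pi Hpi q1 ltac:(lra)).
  pose proof (prob_h_pos pi Hpi q2 ltac:(lra)); pose proof (prob_l_pos pi Hpi q2 ltac:(lra)).
  set (s := pi * (1 - pi)).
  set (P1 := prob_h pi q1 * prob_l pi q1).
  set (P2 := prob_h pi q2 * prob_l pi q2).
  assert (S1 : s <= P1) by (apply prob_h_mul_prob_l_ge; lra).
  assert (S2 : s <= P2) by (apply prob_h_mul_prob_l_ge; lra).
  assert (Hs : 0 < s) by (unfold s; nra).
  set (D := (vH - vL) ^ 2 * ((2 * q1 - 1) ^ 2 - (2 * q2 - 1) ^ 2)).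
  assert (HD : 0 <= D) by (unfold D; apply Rmult_le_pos; [apply pow2_ge_0 | simpl; nra]).
  (* [4 prob_h prob_l = 1 - (1 - 2 pi)^2 (2 q - 1)^2] makes the difference collapse *)
  assert (E : uniform_value vH vL pi q1 - uniform_value vH vL pi q2 = D * (s * s) / (8 * (P1 * P2))).
  { unfold uniform_value, spread, D, P1, P2, s, prob_h, prob_l in *; field; split; lra. }
  rewrite E.
  apply Rmult_le_reg_r with (8 * (P1 * P2)); [nra|].
  unfold Rdiv; rewrite Rmult_assoc, Rinv_l, Rmult_1_r by nra.
  apply Rle_trans with (D * (P1 * P2)); [apply Rmult_le_compat_l; nra | lra].
Qed.

(* Splits the increment along [bl1 <= bl2 <= b0 <= bh2 <= bh1], each piece being
   the integral of an affine weight over one segment. *)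
Lemma gain_increment_split G H P1 L1 bh1 bl1 P2 L2 bh2 bl2 b0 :
  (P1 * affine_increment G H bh1 (-1) b0 bh1 + L1 * affine_increment G H bl1 (-1) b0 bl1)
  - (P2 * affine_increment G H bh2 (-1) b0 bh2 + L2 * affine_increment G H bl2 (-1) b0 bl2)
  = affine_increment G H (P1 * bh1) (- P1) bh2 bh1
  + affine_increment G H (P1 * bh1 - P2 * bh2) (- (P1 - P2)) b0 bh2
  + affine_increment G H (- (L1 * bl1)) L1 bl1 bl2
  + affine_increment G H (- (L1 * bl1 - L2 * bl2)) (L1 - L2) bl2 b0.
Proof. unfold affine_increment; ring. Qed.

Lemma signal_value_increment_le f (pr : integrable_payoffs f) fbar vH vL pi q1 q2 :
  0 < pi < 1 -> vL <= vH -> 1 / 2 <= q2 -> q2 <= q1 -> q1 <= 1 ->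
  (forall p, vL <= p <= vH -> f p <= fbar) ->
  signal_value (mass f pr) (moment f pr) vH vL pi q1
    - signal_value (mass f pr) (moment f pr) vH vL pi q2
  <= fbar * (signal_value (fun p => p) (fun p => p ^ 2 / 2) vH vL pi q1
             - signal_value (fun p => p) (fun p => p ^ 2 / 2) vH vL pi q2).
Proof.
  intros Hpi HvL Hq2 Hq21 Hq1 Hf.
  assert (HP1 : 0 < prob_h pi q1) by (apply prob_h_pos; lra).
  assert (HL1 : 0 < prob_l pi q1) by (apply prob_l_pos; lra).
  assert (Gh1 := prob_h_bid_h_sub_bid0 vH vL pi Hpi q1 ltac:(lra)).
  assert (Gh2 := prob_h_bid_h_sub_bid0 vH vL pi Hpi q2 ltac:(lra)).
  assert (Gl1 := prob_l_bid0_sub_bid_l vH vL pi Hpi q1 ltac:(lra)).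
  assert (Gl2 := prob_l_bid0_sub_bid_l vH vL pi Hpi q2 ltac:(lra)).
  assert (Hs := spread_nonneg vH vL pi Hpi HvL).
  assert (Mh := bid_h_le vH vL pi Hpi HvL q2 q1 ltac:(lra) Hq21 Hq1).
  assert (Ml := bid_l_le vH vL pi Hpi HvL q2 q1 ltac:(lra) Hq21 Hq1).
  assert (Th := bid_h_le vH vL pi Hpi HvL q1 1 ltac:(lra) Hq1 (Rle_refl 1)).
  assert (Tl := bid_l_le vH vL pi Hpi HvL q1 1 ltac:(lra) Hq1 (Rle_refl 1)).
  rewrite bid_h_one in Th by exact Hpi; rewrite bid_l_one in Tl by exact Hpi.
  assert (B0h := bid0_le_bid_h vH vL pi Hpi HvL q2 ltac:(lra)).
  assert (B0l := bid_l_le_bid0 vH vL pi Hpi HvL q2 ltac:(lra)).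
  unfold signal_value; rewrite !gain_increment_split, !Rmult_plus_distr_l.
  set (b0 := bid0 vH vL pi) in *.
  set (bh1 := bid_h vH vL pi q1) in *; set (bh2 := bid_h vH vL pi q2) in *.
  set (bl1 := bid_l vH vL pi q1) in *; set (bl2 := bid_l vH vL pi q2) in *.
  set (P1 := prob_h pi q1) in *; set (P2 := prob_h pi q2) in *.
  set (L1 := prob_l pi q1) in *; set (L2 := prob_l pi q2) in *.
  assert (Hd : 0 <= spread vH vL pi * (2 * q1 - 1) - spread vH vL pi * (2 * q2 - 1)) by nra.
  repeat apply Rplus_le_compat; apply affine_increment_le;
    try (intros p Hp; apply Hf; lra); nra.
Qed.

(* With [x = 2 q - 1], [Ubound] is [fbar (vH - vL)^2] times
   [(x1^2 - x2^2) / 8 + (x1^3 - x2^3) / 12]; the cubic part is slack. *)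
Lemma Ubound_ge fbar vH vL q1 q2 : 0 <= fbar -> 1 / 2 <= q2 -> q2 <= q1 ->
  fbar * ((vH - vL) ^ 2 * ((2 * q1 - 1) ^ 2 - (2 * q2 - 1) ^ 2) / 8)
  <= Ubound fbar vH vL q1 q2.
Proof.
  intros Hf H2 H21.
  assert (E : Ubound fbar vH vL q1 q2
              = fbar * ((vH - vL) ^ 2 * ((2 * q1 - 1) ^ 2 - (2 * q2 - 1) ^ 2) / 8)
                + fbar * ((vH - vL) ^ 2 * ((2 * q1 - 1) ^ 3 - (2 * q2 - 1) ^ 3) / 12))
    by (unfold Ubound; field).
  assert (Hcube : (2 * q2 - 1) ^ 3 <= (2 * q1 - 1) ^ 3) by (apply pow_incr; lra).
  assert (0 <= (vH - vL) ^ 2) by apply pow2_ge_0.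
  assert (0 <= fbar * ((vH - vL) ^ 2 * ((2 * q1 - 1) ^ 3 - (2 * q2 - 1) ^ 3) / 12))
    by (apply Rmult_le_pos; [exact Hf | apply Rmult_le_pos; [apply Rmult_le_pos|]; lra]).
  lra.
Qed.

Theorem mainTheorem16
  (f : R -> R) (pr : integrable_payoffs f)
  (f_nonneg : forall p, 0 <= p -> 0 <= f p)
  (vH vL : R) (HvL : 0 <= vL) (HvHL : vL < vH)
  (fbar : R)
  (Hfbar : is_lub (fun y => exists p, vL <= p <= vH /\ y = f p) fbar)
  (pi q1 q2 : R) (Hpi : 0 < pi < 1)
  (Hq2 : 1 / 2 <= q2) (Hq21 : q2 < q1) (Hq1 : q1 <= 1) :
  U f pr vH vL pi q1 - U f pr vH vL pi q2 <= Ubound fbar vH vL q1 q2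
  /\ (forall c1 c2 : R, c1 - c2 > Ubound fbar vH vL q1 q2 ->
        U f pr vH vL pi q2 - c2 > U f pr vH vL pi q1 - c1).
Proof.
  assert (Hf : forall p, vL <= p <= vH -> f p <= fbar)
    by (intros p Hp; apply Hfbar; exists p; split; auto).
  assert (Hfbar0 : 0 <= fbar)
    by (apply Rle_trans with (f vL); [apply f_nonneg | apply Hf]; lra).
  assert (Hbound : U f pr vH vL pi q1 - U f pr vH vL pi q2 <= Ubound fbar vH vL q1 q2).
  { rewrite !U_signal_value by lra.
    eapply Rle_trans; [apply signal_value_increment_le; auto; lra |].
    rewrite !signal_value_uniform by lra.
    eapply Rle_trans; [apply Rmult_le_compat_l; [exact Hfbar0 |] |].
    - apply uniform_value_increment_le; lra.
    - apply Ubound_ge; lra. }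
  split; [exact Hbound | intros c1 c2 Hc; lra].
Qed.
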